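(* Let $a_0=0$ and let $a_1<a_2<\cdots$ be the increasing enumeration of $\{m\ge1:\ c_m=1\}$. Then $$\{a_n-a_{n-1}:\ n\ge 1\}=\left\{\tfrac13(4^m-1):\ m\ge 1\right\}.$$ Moreover, for $n\ge1$, $a_n-a_{n-1}=1$ if and only if $n\equiv 0,1,2\pmod 4$; and for each $m\ge 2$, $a_n-a_{n-1}=\tfrac13(4^m-1)$ if and only if $n=2^{m+1}k+2^m-1$ for some integer $k\ge 0$.
   Context: For $n\in\mathbb{N}$ let $s_2(n)$ be the sum of the binary digits of $n$ and $t_n=s_2(n)\bmod 2$ (the Prouhet–Thue–Morse sequence). Let $F(X)=\sum_{n\ge1}t_nX^n\in\mathbb{F}_2[[X]]$ and let $G(X)=\sum_{n\ge1}c_nX^n\in\mathbb{F}_2[[X]]$ be its compositional inverse, i.e. $F(G(X))=G(F(X))=X$. The $c_n$ are identified with integers in $\{0,1\}$. *)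

From HB Require Import structures.
From mathcomp Require Import all_boot all_order all_algebra.
Set Implicit Arguments. Unset Strict Implicit. Unset Printing Implicit Defensive.
Import GRing.Theory.
Local Open Scope ring_scope.

Definition series := nat -> 'F_2.

(* sum of binary digits of n (bits of index >= n vanish since 2^n > n) *)
Definition s2 (n : nat) : nat := (\sum_(i < n) ((n %/ 2 ^ i) %% 2))%N.

Definition tm (n : nat) : nat := (s2 n %% 2)%N.

Definition Fser : series := fun n => if n == 0%N then 0 else (tm n)%:R.

Definition trunc (n : nat) (g : series) : {poly 'F_2} := \poly_(i < n.+1) g i.

(* Composition f(g(X)) for g with zero constant term: the coefficient of X^n
   only involves f_k for k <= n and g truncated at degree n. *)
Definition comp (f g : series) : series :=
  fun n => (\sum_(k < n.+1) f k *: (trunc n g) ^+ k)`_n.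

Definition Xser : series := fun n => if n == 1%N then 1 else 0.

Definition comp_inverse (f g : series) : Prop :=
  g 0%N = 0 /\ (forall n, comp f g n = Xser n) /\ (forall n, comp g f n = Xser n).

Definition enumerates (c : series) (a : nat -> nat) : Prop :=
  a 0%N = 0%N /\ (forall n, (a n < a n.+1)%N) /\
  (forall m, (1 <= m)%N -> (c m = 1 <-> exists2 n, (1 <= n)%N & a n = m)).

From Pilot Require Import Defs.
From HB Require Import structures.
From mathcomp Require Import all_boot all_order all_algebra finfield.
From mathcomp Require Import zify ring.

(* Since t_(2n) = t_n and t_(2n+1) = 1 + t_n, over F_2 the Thue-Morse series
   satisfies F + (1 + X) F^2 = X / (1 + X)^2, i.e.
   (1 + X)^3 F^2 + (1 + X)^2 F = X.  Substituting X := G and multiplying by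
   1 + X (1 + G) gives G = X (1 + G) + X^3 (1 + G)^4, a recurrence expressing
   c_(n+1) through c_n and, when n = 2 mod 4, c_(n/4).  The recurrence is
   solved by: c_m = 1 iff m > 0 is a number whose base-4 digits are all 0 or 2,
   or m + 1 is one.  If s_1 < s_2 < ... are these numbers, the support of G is
   s_1 - 1 < s_1 < s_2 - 1 < s_2 < ..., so the gaps alternate between 1 and
   s_(p+1) - s_p - 1 = (4^(v+1) - 1) / 3, where v is the 2-adic valuation of
   p + 1. *)

Set Implicit Arguments.
Unset Strict Implicit.
Unset Printing Implicit Defensive.
Import GRing.Theory.

Section EqUpto.
Local Open Scope ring_scope.
Variable R : comNzRingType.
Implicit Types p q : {poly R}.

(* Congruence modulo X^(N+1): power series identities are proved on truncations. *)
Definition eq_upto N p q := forall i, (i <= N)%N -> p`_i = q`_i.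

Lemma eq_upto_refl N p : eq_upto N p p.
Proof. by []. Qed.

Lemma eq_upto_sym N p q : eq_upto N p q -> eq_upto N q p.
Proof. by move=> pq i iN; rewrite pq. Qed.

Lemma eq_upto_trans N p q r : eq_upto N p q -> eq_upto N q r -> eq_upto N p r.
Proof. by move=> pq qr i iN; rewrite pq ?qr. Qed.

Lemma eq_uptoD N p q p' q' :
  eq_upto N p p' -> eq_upto N q q' -> eq_upto N (p + q) (p' + q').
Proof. by move=> pp qq i iN; rewrite !coefD pp ?qq. Qed.

Lemma eq_uptoM N p q p' q' :
  eq_upto N p p' -> eq_upto N q q' -> eq_upto N (p * q) (p' * q').
Proof.
move=> pp qq i iN; rewrite !coefM; apply: eq_bigr => j _.
by have ji := ltn_ord j; rewrite pp ?qq //; lia.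
Qed.

Lemma eq_uptoX N p p' k : eq_upto N p p' -> eq_upto N (p ^+ k) (p' ^+ k).
Proof. by move=> pp; elim: k => [|k IHk] //; rewrite !exprS; apply: eq_uptoM. Qed.

Lemma coef_exp_small q k i : q`_0 = 0 -> (i < k)%N -> (q ^+ k)`_i = 0.
Proof.
move=> q0; elim: k i => [|k IHk] i //= ik.
rewrite exprSr coefM big1 // => j _.
have [jk|kj] := ltnP j k; first by rewrite IHk ?mul0r.
by rewrite (_ : (i - j = 0)%N) ?q0 ?mulr0 //; lia.
Qed.

Lemma eq_upto_compl N p p' q :
  q`_0 = 0 -> eq_upto N p p' -> eq_upto N (p \Po q) (p' \Po q).
Proof.
move=> q0 pp i iN; apply/eqP; rewrite -subr_eq0 -coefB -comp_polyB coef_comp_poly.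
apply/eqP/big1 => j _; rewrite coefB.
have [jN|Nj] := leqP j N; first by rewrite pp // subrr mul0r.
by rewrite coef_exp_small ?mulr0 // (leq_ltn_trans iN).
Qed.

Lemma eq_upto_compr N p q q' : eq_upto N q q' -> eq_upto N (p \Po q) (p \Po q').
Proof.
by move=> qq i iN; rewrite !coef_comp_poly; apply: eq_bigr => j _; rewrite (eq_uptoX j qq).
Qed.

End EqUpto.

Section Truncation.
Local Open Scope ring_scope.

Lemma coef_trunc n (g : series) i : (trunc n g)`_i = if (i <= n)%N then g i else 0.
Proof. by rewrite coef_poly ltnS. Qed.

Lemma eq_upto_trunc n N (g : series) : (n <= N)%N -> eq_upto n (trunc n g) (trunc N g).
Proof. by move=> nN i ni; rewrite !coef_trunc ni (leq_trans ni nN). Qed.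

Lemma comp_trunc (f g : series) n : Defs.comp f g n = (trunc n f \Po trunc n g)`_n.
Proof.
suff -> : trunc n f \Po trunc n g = \sum_(k < n.+1) f k *: trunc n g ^+ k by [].
rewrite [trunc n f]poly_def rmorph_sum; apply: eq_bigr => k _.
by rewrite /= comp_polyZ comp_Xn_poly.
Qed.

Lemma comp_eq_upto (f g : series) N :
  g 0%N = 0 -> (forall n, Defs.comp f g n = Xser n) ->
  eq_upto N (trunc N f \Po trunc N g) 'X.
Proof.
move=> g0 fg i iN.
have -> : 'X`_i = Xser i by rewrite coefX /Xser; case: (i == 1)%N.
rewrite -fg comp_trunc.
have g0i : (trunc i g)`_0 = 0 by rewrite coef_trunc g0.
have e : eq_upto i (trunc i f \Po trunc i g) (trunc N f \Po trunc N g).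
  apply: eq_upto_trans (eq_upto_compl g0i (eq_upto_trunc f iN)) _.
  exact: eq_upto_compr (eq_upto_trunc g iN).
by rewrite e.
Qed.

End Truncation.

Variant double_spec : nat -> bool -> Type :=
  | DoubleEven p : double_spec p.*2 false
  | DoubleOdd p : double_spec p.*2.+1 true.

Lemma doubleP n : double_spec n (odd n).
Proof. by rewrite -{1}(odd_double_half n); case: (odd n); constructor. Qed.

Definition bitsum (w : nat -> nat) n := \sum_(i < n) (n %/ 2 ^ i %% 2) * w i.

Lemma bitsum_widen w n K :
  n <= K -> bitsum w n = \sum_(i < K) (n %/ 2 ^ i %% 2) * w i.
Proof.
move=> nK; rewrite /bitsum (big_ord_widen K (fun i => n %/ 2 ^ i %% 2 * w i) nK).
rewrite big_mkcond /=.
apply: eq_bigr => i _; case: ltnP => // ni.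
by rewrite divn_small ?mod0n // (leq_ltn_trans ni) // ltn_expl.
Qed.

Lemma bitsum_double w n : bitsum w n.*2 = bitsum (fun i => w i.+1) n.
Proof.
have n2n : n <= n.*2 by rewrite -addnn leq_addr.
rewrite (bitsum_widen w (leqnSn n.*2)) big_ord_recl /= expn0 divn1 modn2 odd_double.
rewrite (bitsum_widen _ n2n); apply: eq_bigr => i _.
by rewrite /bump /= add1n expnS divnMA divn2 doubleK.
Qed.

Lemma bitsum_doubleS w n : bitsum w n.*2.+1 = w 0 + bitsum (fun i => w i.+1) n.
Proof.
have n2n : n <= n.*2 by rewrite -addnn leq_addr.
rewrite {1}/bitsum big_ord_recl /= expn0 divn1 modn2 /= odd_double mul1n.
rewrite (bitsum_widen _ n2n); congr (_ + _); apply: eq_bigr => i _.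
by rewrite /bump /= add1n expnS divnMA divn2 -[n.*2.+1]/(true + n.*2) half_bit_double.
Qed.

Lemma s2_bitsum n : s2 n = bitsum (fun=> 1) n.
Proof. by apply: eq_bigr => i _; rewrite muln1. Qed.

Lemma tm_double n : tm n.*2 = tm n.
Proof. by rewrite /tm !s2_bitsum bitsum_double. Qed.

Lemma tm_doubleS n : tm n.*2.+1 = (s2 n).+1 %% 2.
Proof. by rewrite /tm !s2_bitsum bitsum_doubleS. Qed.

Section CharacteristicTwo.
Local Open Scope ring_scope.

Lemma F2_char : 2%:R = 0 :> 'F_2.
Proof. exact: pcharf0 (pchar_Fp (isT : prime 2)). Qed.

Lemma F2_addxx (x : 'F_2) : x + x = 0.
Proof. by rewrite -mulr2n -mulr_natr F2_char mulr0. Qed.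

Lemma F2_sqr (x : 'F_2) : x ^+ 2 = x.
Proof. by rewrite -{2}(expf_card x) card_Fp. Qed.

Lemma F2poly_char : 2%:R = 0 :> {poly 'F_2}.
Proof. by rewrite -polyC_natr F2_char. Qed.

Lemma F2poly_sqr (p : {poly 'F_2}) : p ^+ 2 = p \Po 'X^2.
Proof.
elim/poly_ind: p => [|p c IHp]; first by rewrite expr0n comp_poly0.
rewrite comp_poly_MXaddC -IHp sqrrD -(mulr_natr _ 2) F2poly_char mulr0 addr0.
by rewrite exprMn -polyC_exp F2_sqr.
Qed.

Lemma F2poly_exp4 (p : {poly 'F_2}) : p ^+ 4 = p \Po 'X^4.
Proof.
by rewrite (exprM p 2 2) (F2poly_sqr (p ^+ 2)) (F2poly_sqr p) -comp_polyA comp_Xn_poly -exprM.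
Qed.

Lemma F2_natr_addb (a b : bool) : (a (+) b)%:R = a%:R + b%:R :> 'F_2.
Proof. by case: a b => [] []; rewrite /= ?addr0 ?add0r ?F2_addxx. Qed.

Lemma F2_natr_andb (a b : bool) : (a && b)%:R = a%:R * b%:R :> 'F_2.
Proof. by case: a b => [] []; rewrite /= ?mulr1 ?mulr0. Qed.

Lemma F2_natr_eq1 (b : bool) : b%:R = 1 :> 'F_2 <-> b.
Proof. by case: b; split => // /eqP; rewrite eq_sym oner_eq0. Qed.

End CharacteristicTwo.

Section ThueMorseSeries.
Local Open Scope ring_scope.

Lemma Fser_tm n : Fser n = (tm n)%:R.
Proof. by case: n => [|n] //; rewrite /tm /s2 big_ord0. Qed.

Lemma Fser_double n : Fser n.*2 = Fser n.
Proof. by rewrite !Fser_tm tm_double. Qed.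

Lemma Fser_doubleS n : Fser n.*2.+1 = 1 + Fser n.
Proof. by rewrite !Fser_tm tm_doubleS /tm !Fp_nat_mod // -[(s2 n).+1]add1n natrD. Qed.

Lemma tm_poly_odd N i : (i <= N)%N ->
  (trunc N Fser + (1 + 'X) * trunc N Fser ^+ 2)`_i = (odd i)%:R.
Proof.
move=> iN; set f := trunc N Fser.
have fE j : (j <= N)%N -> f`_j = Fser j by move=> jN; rewrite coef_trunc jN.
rewrite mulrDl mul1r !coefD coefXM F2poly_sqr !coef_comp_poly_Xn // !dvdn2 !divn2.
case: (doubleP i) iN => k iN; rewrite ?odd_double ?doubleK /=.
  have -> : (if k.*2 == 0%N then 0 else if ~~ odd k.*2.-1 then f`_(k.*2.-1./2) else 0) = 0.
    by case: k {iN} => [|k] //=; rewrite odd_double.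
  by rewrite addr0 !fE ?Fser_double ?F2_addxx //; lia.
by rewrite add0r !fE ?Fser_doubleS -?addrA ?F2_addxx ?addr0 //; lia.
Qed.

Lemma tm_poly_eq N :
  eq_upto N ((1 + 'X) ^+ 3 * trunc N Fser ^+ 2 + (1 + 'X) ^+ 2 * trunc N Fser) 'X.
Proof.
set f := trunc N Fser; set u := f + (1 + 'X) * f ^+ 2.
have -> : (1 + 'X) ^+ 3 * f ^+ 2 + (1 + 'X) ^+ 2 * f = u + 'X^2 * u.
  transitivity (u + 'X^2 * u + 2%:R * ('X * u)); first by rewrite /u; ring.
  by rewrite F2poly_char mul0r addr0.
move=> i iN; rewrite coefD coefXnM coefX tm_poly_odd //.
case: ltnP => i2; first by rewrite addr0; case: i i2 {iN} => [|[|]].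
rewrite tm_poly_odd ?(leq_trans (leq_subr 2 i)) // oddB // addbF F2_addxx.
by case: i i2 {iN} => [|[|]].
Qed.

End ThueMorseSeries.

Section InverseSeries.
Local Open Scope ring_scope.
Variable G : series.
Hypothesis FG : comp_inverse Fser G.

Lemma inverse_poly_eq N :
  eq_upto N ((1 + trunc N G) ^+ 4 * 'X^3 + (1 + trunc N G) * 'X) (trunc N G).
Proof.
case: FG => G0 [FG_X _]; set g := trunc N G; set h := 1 + g.
have g0 : g`_0 = 0 by rewrite coef_trunc G0.
have fg : eq_upto N (trunc N Fser \Po g) 'X := comp_eq_upto G0 FG_X.
have quad : eq_upto N (h ^+ 3 * 'X ^+ 2 + h ^+ 2 * 'X) g.
  have := eq_upto_compl g0 (@tm_poly_eq N).
  rewrite comp_polyX comp_polyD (comp_polyM ((1 + 'X) ^+ 3)) (comp_polyM ((1 + 'X) ^+ 2)).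
  rewrite !rmorphXn /= comp_polyD comp_polyX rmorph1 -/h.
  apply: eq_upto_trans; apply: eq_upto_sym.
  by apply: eq_uptoD; apply: eq_uptoM => //; apply: eq_uptoX.
(* multiplying by 1 + h X cancels the two h^3 X^2 terms in characteristic 2 *)
have := eq_uptoD (eq_uptoM quad (eq_upto_refl (N:=N) (1 + h * 'X)))
                 (eq_upto_refl (N:=N) (- (g * h * 'X))).
have -> : g * (1 + h * 'X) - g * h * 'X = g by ring.
suff -> : (h ^+ 3 * 'X ^+ 2 + h ^+ 2 * 'X) * (1 + h * 'X) - g * h * 'X =
          h ^+ 4 * 'X^3 + h * 'X + 2%:R * (h ^+ 3 * 'X ^+ 2).
  by rewrite F2poly_char mul0r addr0.
by rewrite /h; ring.
Qed.

Lemma inverse_coefS n :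
  G n.+1 = (n == 0)%:R + G n +
            (n %% 4 == 2)%N%:R * ((n %/ 4 == 0)%N%:R + G (n %/ 4)%N).
Proof.
have := @inverse_poly_eq n.+1 n.+1 (leqnn _); set g := trunc n.+1 G.
have gE j : (j <= n.+1)%N -> g`_j = G j by move=> jn; rewrite coef_trunc jn.
rewrite -(gE n.+1) // !coefD coefMXn coefMX F2poly_exp4 coef_comp_poly_Xn // coefD coef1.
move=> <- /=; rewrite coefD coef1 (gE n) // addrC; congr (_ + _).
case: ltnP => n2.
  by rewrite (_ : (n %% 4 == 2)%N = false) ?mul0r //; lia.
rewrite (_ : (4 %| n.+1 - 3)%N = (n %% 4 == 2)%N); last by lia.
case: eqP => [n42|_]; last by rewrite mul0r.
by rewrite mul1r gE (_ : (n.+1 - 3) %/ 4 = n %/ 4)%N //; lia.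
Qed.

End InverseSeries.

(* [spread m] has as base-4 digits the binary digits of m, doubled. *)
Definition spread := bitsum (fun i => 2 * 4 ^ i).

Lemma spread_double n : spread n.*2 = 4 * spread n.
Proof.
rewrite /spread bitsum_double /bitsum big_distrr; apply: eq_bigr => i _ /=.
by rewrite expnS; ring.
Qed.

Lemma spread_doubleS n : spread n.*2.+1 = 4 * spread n + 2.
Proof. by rewrite -spread_double /spread bitsum_doubleS bitsum_double addnC. Qed.

Lemma spread0 : spread 0 = 0.
Proof. exact: big_ord0. Qed.

Lemma spread_ge n : n <= spread n.
Proof.
elim/ltn_ind: n => n IH; case: (doubleP n) IH => p IH.
  by rewrite spread_double; case: p IH => // p IH; have := IH p.+1; lia.
by rewrite spread_doubleS; have := IH p; lia.
Qed.

Lemma odd_spread n : odd (spread n) = false.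
Proof. by case: (doubleP n) => p; rewrite ?spread_double ?spread_doubleS; lia. Qed.

Definition rep4 m := (4 ^ m - 1) %/ 3.

Lemma rep4S m : rep4 m.+1 = 4 * rep4 m + 1.
Proof.
have : 4 ^ m %% 3 = 1 by rewrite -modnXm exp1n.
by rewrite /rep4 expnS; lia.
Qed.

Lemma rep4_gt0 m : 0 < m -> 0 < rep4 m.
Proof. by case: m => // m _; rewrite rep4S addn1. Qed.

Lemma rep4_inj : injective rep4.
Proof.
apply/incn_inj/leq_mono/(homo_ltn ltn_trans) => m.
by rewrite rep4S; lia.
Qed.

Lemma logn2_eq x j : 0 < x -> logn 2 x = j <-> exists k, x = 2 ^ j * k.*2.+1.
Proof.
move=> x0; split=> [<-|[k ->]].
  have [y y_odd {1}->] := pfactor_coprime (isT : prime 2) x0.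
  exists y./2; rewrite mulnC; congr (_ * _).
  by rewrite -{1}(odd_double_half y) -coprime2n y_odd.
rewrite lognM ?expn_gt0 // pfactorK // logn_coprime ?addn0 //.
by rewrite coprime2n /= odd_double.
Qed.

Lemma logn2_double x : 0 < x -> logn 2 x.*2 = (logn 2 x).+1.
Proof. by move=> x0; rewrite -mul2n lognM // logn_prime. Qed.

Lemma spreadS m : spread m.+1 = spread m + rep4 (logn 2 m.+1).+1 + 1.
Proof.
elim/ltn_ind: m => m IH; case: (doubleP m) IH => p IH.
  rewrite spread_doubleS spread_double logn_coprime ?coprime2n /= ?odd_double //.
  by rewrite (_ : rep4 1 = 1) //; lia.
rewrite (_ : p.*2.+2 = p.+1.*2) // spread_double spread_doubleS logn2_double // rep4S.
by have := IH p; lia.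
Qed.

Definition apos n := if odd n then (spread (uphalf n)).-1 else spread n./2.

Definition gap_exp n := if odd n then logn 2 n.+1 else 1.

Lemma apos_double p : apos p.*2 = spread p.
Proof. by rewrite /apos odd_double doubleK. Qed.

Lemma apos_doubleS p : apos p.*2.+1 = (spread p.+1).-1.
Proof. by rewrite /apos /= odd_double /= doubleK. Qed.

Lemma apos_gap n : apos n.+1 - apos n = rep4 (gap_exp n.+1).
Proof.
rewrite /gap_exp /=; case: (doubleP n) => p /=; rewrite ?odd_double /=.
  rewrite apos_doubleS apos_double spreadS -doubleS logn2_double //; lia.
rewrite -doubleS apos_double apos_doubleS.
by have := spread_ge p.+1; rewrite (_ : rep4 1 = 1) //; lia.
Qed.

Lemma gap_exp_gt0 n : 0 < n -> 0 < gap_exp n.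
Proof.
rewrite /gap_exp; case: (doubleP n) => p //= p0.
by rewrite -doubleS logn2_double.
Qed.

Lemma apos_lt n : apos n < apos n.+1.
Proof. by rewrite -subn_gt0 apos_gap rep4_gt0 ?gap_exp_gt0. Qed.

Lemma apos_ge n : n <= apos n.
Proof. by elim: n => // n IH; apply: leq_ltn_trans IH (apos_lt n). Qed.

Lemma gap_exp_pow2 m : 0 < m -> gap_exp (2 ^ m).-1 = m.
Proof.
move=> m0; have t0 := expn_gt0 2 m; rewrite /gap_exp prednK // pfactorK //.
suff -> : odd (2 ^ m).-1 by [].
by case: m m0 {t0} => // m _; rewrite expnS; have := expn_gt0 2 m; lia.
Qed.

Lemma gap_exp_eq1 n : 0 < n -> gap_exp n = 1 <-> n %% 4 \in [:: 0; 1; 2].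
Proof.
rewrite /gap_exp !inE; case: (doubleP n) => p p0 /=; first by split=> // _; lia.
rewrite logn2_eq // expn1.
by split=> [[k pk]|h]; [|exists (p %/ 2)]; lia.
Qed.

Lemma gap_exp_eq m n : 1 < m -> gap_exp n = m <-> exists k, n = 2 ^ m.+1 * k + 2 ^ m - 1.
Proof.
move=> m1; rewrite /gap_exp expnS; have t0 := expn_gt0 2 m.
case: (doubleP n) => p /=.
  split=> [m_eq1|[k pk]]; first lia.
  by move: pk; case: m m1 {t0} => [|[|m]] // _; rewrite !expnS; have := expn_gt0 2 m; lia.
rewrite logn2_eq //.
by split=> -[k pk]; exists k; lia.
Qed.

Definition in_spread y := has (fun m => spread m == y) (iota 0 y.+1).

Lemma in_spreadP y : reflect (exists m, spread m = y) (in_spread y).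
Proof.
apply: (iffP hasP) => [[m _ /eqP <-]|[m <-]]; first by exists m.
by exists m; rewrite ?mem_iota ?add0n ?ltnS ?spread_ge.
Qed.

Lemma in_spread0 : in_spread 0.
Proof. by apply/in_spreadP; exists 0; rewrite spread0. Qed.

Lemma in_spread_odd y : odd y -> in_spread y = false.
Proof. by move=> y_odd; apply/in_spreadP => -[m ym]; rewrite -ym odd_spread in y_odd. Qed.

Lemma in_spread4 q : in_spread (4 * q) = in_spread q.
Proof.
apply/in_spreadP/in_spreadP => -[m e].
  by case: (doubleP m) e => p; rewrite ?spread_double ?spread_doubleS => e; [exists p|]; lia.
by exists m.*2; rewrite spread_double e.
Qed.

Lemma in_spread4S2 q : in_spread (4 * q).+2 = in_spread q.
Proof.
apply/in_spreadP/in_spreadP => -[m e].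
  by case: (doubleP m) e => p; rewrite ?spread_double ?spread_doubleS => e; [|exists p]; lia.
by exists m.*2.+1; rewrite spread_doubleS e addn2.
Qed.

Lemma in_spread_succ y : in_spread y -> in_spread y.+1 = false.
Proof. by case/in_spreadP=> m <-; rewrite in_spread_odd //= odd_spread. Qed.

Definition inv_support y := (0 < y) && in_spread y || in_spread y.+1.

Lemma inv_supportS n :
  inv_support n.+1 = (n == 0) (+) inv_support n
                     (+) ((n %% 4 == 2) && ((n %/ 4 == 0) (+) inv_support (n %/ 4))).
Proof.
have [q [r [r4 ->]]] : exists q r, r < 4 /\ n = 4 * q + r.
  by exists (n %/ 4), (n %% 4); lia.
rewrite (_ : (4 * q + r) %% 4 = r); last by lia.
rewrite (_ : (4 * q + r) %/ 4 = q); last by lia.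
have in4S1 k : in_spread (4 * k).+1 = false by rewrite in_spread_odd //= oddM.
have in4S3 k : in_spread (4 * k).+3 = false by rewrite in_spread_odd //= oddM.
have e4 : (4 * q).+4 = 4 * q.+1 by lia.
rewrite /inv_support.
case: r r4 => [|[|[|[|r]]]] // _; rewrite ?addn0 ?addn1 ?addn2 ?addn3 /=.
- rewrite in_spread4S2 in_spread4 in4S1 muln_eq0 muln_gt0 /=.
  by case: q {e4} => [|q]; rewrite ?andbF ?orbF ?addbF //= in_spread0.
- by rewrite in_spread4S2 in4S1 in4S3 /= orbF addbF.
- rewrite e4 in_spread4 in_spread4S2 in4S3 /= orbF.
  case: q {e4} => [|q] /=; first by rewrite (in4S1 0) in_spread0.
  by case S1: (in_spread q.+1) => //=; rewrite in_spread_succ ?S1.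
- by rewrite e4 in_spread4 in4S1 in4S3 /= orbF addbF.
Qed.

Lemma inv_supportP y : 0 < y -> reflect (exists2 n, 0 < n & apos n = y) (inv_support y).
Proof.
move=> y0; rewrite /inv_support y0 /=; apply: (iffP orP) => [[]|[n n0]].
- case/in_spreadP=> -[|m] e; first by rewrite spread0 in e; lia.
  by exists m.+1.*2; rewrite ?apos_double.
- case/in_spreadP=> -[|m] e; first by rewrite spread0 in e.
  by exists m.*2.+1; rewrite ?apos_doubleS ?e.
case: (doubleP n) n0 => p p0; rewrite ?apos_double ?apos_doubleS => <-.
  by left; apply/in_spreadP; exists p.
by right; rewrite prednK ?(leq_trans _ (spread_ge _)) //; apply/in_spreadP; exists p.+1.
Qed.

Lemma enumerates_leS (c : series) a b n :
  enumerates c a -> enumerates c b -> a n = b n -> b n.+1 <= a n.+1.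
Proof.
move=> [a0 [a_lt ea]] [b0 [b_lt eb]] abn.
have a_pos : 0 < a n.+1 by apply: leq_ltn_trans (a_lt n).
have [j _ bj] : exists2 j, 0 < j & b j = a n.+1 by apply/eb/ea => //; exists n.+1.
have b_le : {mono b : i j / i <= j} := leq_mono (homo_ltn ltn_trans b_lt).
by rewrite -bj b_le -(leqW_mono b_le) bj -abn.
Qed.

Lemma enumerates_uniq (c : series) a b : enumerates c a -> enumerates c b -> a =1 b.
Proof.
move=> ea eb; elim=> [|n IHn]; first by rewrite ea.1 eb.1.
by apply/eqP; rewrite eqn_leq (enumerates_leS eb ea) ?(enumerates_leS ea eb).
Qed.

Section InverseCoefficients.
Local Open Scope ring_scope.

Lemma inverse_coef G : comp_inverse Fser G -> forall n, G n = (inv_support n)%:R.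
Proof.
move=> FG; elim/ltn_ind => -[|n] IH.
  by case: FG => ->; rewrite /inv_support (in_spread_odd (isT : odd 1)).
rewrite inverse_coefS // inv_supportS !F2_natr_addb F2_natr_andb F2_natr_addb !IH //.
by rewrite ltnS leq_div.
Qed.

Lemma enumerates_apos G : comp_inverse Fser G -> enumerates G apos.
Proof.
move=> FG; split; first by rewrite /apos /= spread0.
split=> [|m m0]; first exact: apos_lt.
by rewrite inverse_coef // F2_natr_eq1; split => /(inv_supportP m0).
Qed.

End InverseCoefficients.

Local Open Scope ring_scope.

Theorem mainTheorem7 (G : series) :
  comp_inverse Fser G ->
  (* the set {m >= 1 : c_m = 1} is infinite, so the enumeration a exists *)
  (forall N : nat, exists2 m : nat, (N < m)%N & G m = 1) /\
  (forall a : nat -> nat, enumerates G a ->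
     (* {a_n - a_{n-1} : n >= 1} = {(4^m - 1)/3 : m >= 1} *)
     ((forall n, (1 <= n)%N ->
         exists2 m, (1 <= m)%N & (a n - a n.-1)%N = ((4 ^ m - 1) %/ 3)%N) /\
      (forall m, (1 <= m)%N ->
         exists2 n, (1 <= n)%N & (a n - a n.-1)%N = ((4 ^ m - 1) %/ 3)%N)) /\
     (forall n, (1 <= n)%N ->
         ((a n - a n.-1)%N = 1%N <-> (n %% 4 \in [:: 0; 1; 2])%N)) /\
     (forall m n, (2 <= m)%N -> (1 <= n)%N ->
         ((a n - a n.-1)%N = ((4 ^ m - 1) %/ 3)%N <->
          exists k : nat, n = (2 ^ m.+1 * k + 2 ^ m - 1)%N))).
Proof.
move=> FG; have eA := enumerates_apos FG.
split=> [N|a ea].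
  have aN_gt0 : (0 < apos N.+1)%N := leq_trans (ltn0Sn N) (apos_ge N.+1).
  by exists (apos N.+1); [exact: apos_ge | apply/(eA.2.2 _ aN_gt0); exists N.+1].
have gapE n : (0 < n)%N -> (a n - a n.-1)%N = rep4 (gap_exp n).
  by case: n => // n _; rewrite !(enumerates_uniq ea eA) apos_gap.
have rep4_eq m m' : rep4 m = rep4 m' <-> m = m' by split=> [/rep4_inj|->].
split; [split|split].
- by move=> n n0; exists (gap_exp n); rewrite ?gapE ?gap_exp_gt0.
- move=> m m0; have t2 : (1 < 2 ^ m)%N by rewrite -{1}(expn0 2) ltn_exp2l.
  by exists (2 ^ m)%N.-1; [lia | rewrite gapE ?gap_exp_pow2 //; lia].
- by move=> n n0; rewrite gapE // -[1%N]/(rep4 1) rep4_eq gap_exp_eq1.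
- by move=> m n m1 n0; rewrite gapE // -/(rep4 m) rep4_eq gap_exp_eq.
Qed.
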